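(* Let $n\ge2$ and let $\mathcal{S}$ be a quadric hypersurface in $\mathbb{R}^n$ containing at least two points but no line, with an affine change of variables $\mathbf{s}=T\mathbf{s}'+\mathbf{v}$ bringing it into one of the normal forms (1)–(3), and with the associated parameterisation $\boldsymbol{\sigma}(\mathbf{t})=T\boldsymbol{\sigma}'(\mathbf{t})+\mathbf{v}$, $\mathbf{t}\in D$, described in the context. Let $O\subseteq D\setminus\sigma_1^{-1}(0)$ be an open set. If there is $\mathbf{t}\in O$ such that \[\det\left(\frac{\partial\overline{\boldsymbol{\sigma}}'(\mathbf{t})}{\partial\mathbf{t}}\right)\neq0,\] where $\overline{\boldsymbol{\sigma}}'=(\sigma_1',\dots,\sigma_{n-1}')^T$, then $\boldsymbol{\sigma}(O)=\{\boldsymbol{\sigma}(\mathbf{t}):\mathbf{t}\in O\}$ is not contained in any (affine) hyperplane of $\mathbb{R}^n$ (i.e. $O$ satisfies the hyperplane condition).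
   Context: Let $\mathcal{S}=\{\mathbf{s}\in\mathbb{R}^n:\tfrac12\mathbf{s}^TA\mathbf{s}+\mathbf{b}^T\mathbf{s}+c=0\}$ with $A$ a nonzero real symmetric matrix, and assume $\mathcal{S}$ contains at least two points but no line. Let $T$ be an invertible real $n\times n$ matrix and $\mathbf{v}\in\mathbb{R}^n$ such that under $\mathbf{s}=T\mathbf{s}'+\mathbf{v}$ the equation of $\mathcal{S}$ becomes one of: (1) (when $\operatorname{rk}A=n-1$) $\sum_{j=1}^{n-1}\epsilon_js_j'^2=s_n'$ with $\epsilon_j\in\{-1,1\}$; (2) (when $\operatorname{rk}A=n$ and $A$ has eigenvalues of both signs) $s_1's_n'+\sum_{j=2}^{n-1}\epsilon_js_j'^2=c'$ with $c'\neq0$, $\epsilon_j\in\{-1,1\}$; (3) (when $\operatorname{rk}A=n$ and all eigenvalues of $A$ have the same sign) $\sum_{j=1}^ns_j'^2=1$. The parameterisation $\boldsymbol{\sigma}'=(\sigma_1',\dots,\sigma_n')^T$ of the normal form is: in case (1), $\sigma_j'(\mathbf{t})=t_j$ for $j\le n-1$, $\sigma_n'(\mathbf{t})=\sum_{j=1}^{n-1}\epsilon_jt_j^2$, $D=\mathbb{R}^{n-1}$; in case (2), $\sigma_j'(\mathbf{t})=t_j$ for $j\le n-1$, $\sigma_n'(\mathbf{t})=\frac{1}{t_1}\big(c'-\sum_{j=2}^{n-1}\epsilon_jt_j^2\big)$, $D=(\mathbb{R}\setminus\{0\})\times\mathbb{R}^{n-2}$; in case (3), $\boldsymbol{\sigma}'(\mathbf{t})=\boldsymbol{\tau}(\boldsymbol{\varphi})$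 with $\varphi_j=2\arctan(t_j)$, where $\boldsymbol{\tau}$ is the spherical-coordinate map $\tau_1=\cos\varphi_1$, $\tau_k=\sin\varphi_1\cdots\sin\varphi_{k-1}\cos\varphi_k$ for $2\le k\le n-1$, $\tau_n=\sin\varphi_1\cdots\sin\varphi_{n-1}$, $D=\mathbb{R}^{n-1}$. Then $\boldsymbol{\sigma}(\mathbf{t})=T\boldsymbol{\sigma}'(\mathbf{t})+\mathbf{v}$ with components $\sigma_1,\dots,\sigma_n$, and $\sigma_1^{-1}(0)$ is the zero set of $\sigma_1$. *)

From HB Require Import structures.
From mathcomp Require Import all_boot all_order all_algebra.
From mathcomp Require Import all_classical all_reals all_analysis.
Set Implicit Arguments. Unset Strict Implicit. Unset Printing Implicit Defensive.
Import Order.TTheory GRing.Theory Num.Theory.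
Import numFieldNormedType.Exports.
Local Open Scope ring_scope.
Local Open Scope classical_set_scope.

(* Dimension convention: n = p.+2 (so n >= 2), parameter dimension n-1 = p.+1.
   Indices are 0-based: paper's s_1..s_n are our s_0..s_(p.+1);
   paper's t_1..t_(n-1) are our t_0..t_p. *)

Definition quad (R : realType) (n : nat) (A : 'M[R]_n) (b : 'cV[R]_n) (c : R)
  (s : 'cV[R]_n) : R :=
  2^-1 * (s^T *m A *m s) 0 0 + (b^T *m s) 0 0 + c.

(* Normal-form data, for n = p.+2. In case 2 the entry eps ord0 is unused
   (the paper's eps_j, j = 2..n-1, are our eps j for j = 1..p). *)
Inductive nf_case (R : realType) (p : nat) :=
| NF1 of ('I_p.+1 -> R)
| NF2 of ('I_p.+1 -> R) & R
| NF3.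

Definition sign_vec (R : realType) (p : nat) (eps : 'I_p.+1 -> R) :=
  forall j, eps j = 1 \/ eps j = -1.

Definition nf_valid (R : realType) (p : nat) (A : 'M[R]_p.+2) (k : nf_case R p) : Prop :=
  match k with
  | NF1 eps => sign_vec eps /\ \rank A = p.+1
  | NF2 eps c' => sign_vec eps /\ c' != 0 /\ \rank A = p.+2 /\
      (exists a, eigenvalue A a /\ 0 < a) /\ (exists a, eigenvalue A a /\ a < 0)
  | NF3 => \rank A = p.+2 /\
      ((forall a, eigenvalue A a -> 0 < a) \/ (forall a, eigenvalue A a -> a < 0))
  end.

Definition nf_eq (R : realType) (p : nat) (k : nf_case R p) (s' : 'cV[R]_p.+2) : Prop :=
  match k with
  | NF1 eps => \sum_(j < p.+1) eps j * s' (lift ord_max j) 0 ^+ 2 = s' ord_max 0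
  | NF2 eps c' => s' ord0 0 * s' ord_max 0
      + \sum_(j < p.+1 | (0 < j)%N) eps j * s' (lift ord_max j) 0 ^+ 2 = c'
  | NF3 => \sum_(i < p.+2) s' i 0 ^+ 2 = 1
  end.

Definition nf_dom (R : realType) (p : nat) (k : nf_case R p) : set 'rV[R]_p.+1 :=
  match k with
  | NF2 _ _ => [set t | t 0 ord0 != 0]
  | _ => setT
  end.

Definition nf_phi (R : realType) (p : nat) (t : 'rV[R]_p.+1) (j : 'I_p.+1) : R :=
  2 * atan (t 0 j).

Definition nf_sigma' (R : realType) (p : nat) (k : nf_case R p) (t : 'rV[R]_p.+1)
  : 'cV[R]_p.+2 :=
  \col_(i < p.+2)
   match k with
   | NF1 eps =>
       match unlift ord_max i with
       | Some j => t 0 j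
       | None => \sum_(j < p.+1) eps j * t 0 j ^+ 2
       end
   | NF2 eps c' =>
       match unlift ord_max i with
       | Some j => t 0 j
       | None => (t 0 ord0)^-1 *
                 (c' - \sum_(j < p.+1 | (0 < j)%N) eps j * t 0 j ^+ 2)
       end
   | NF3 =>
       match unlift ord_max i with
       | Some j => (\prod_(l < p.+1 | (l < j)%N) sin (nf_phi t l)) * cos (nf_phi t j)
       | None => \prod_(l < p.+1) sin (nf_phi t l)
       end
   end.

(* sigma-bar' = (sigma'_1, ..., sigma'_(n-1)), as a row vector (for 'J). *)
Definition nf_sigbar' (R : realType) (p : nat) (k : nf_case R p) (t : 'rV[R]_p.+1)
  : 'rV[R]_p.+1 :=
  \row_(j < p.+1) nf_sigma' k t (lift ord_max j) 0.

Definition nf_sigma (R : realType) (p : nat) (T : 'M[R]_p.+2) (v : 'cV[R]_p.+2)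
  (k : nf_case R p) (t : 'rV[R]_p.+1) : 'cV[R]_p.+2 :=
  T *m nf_sigma' k t + v.

(* If sigma(O) lies in the hyperplane
   a^T s = beta, then w^T sigma'(t) is constant on O for w := T^T a, which is
   nonzero.  Along a coordinate line t_j through a point of O, w^T sigma'(t) is
   a quadratic polynomial in t_j in case (1), becomes one after multiplication
   by t_1 in case (2), and in case (3) is a combination of cos and sin of
   2 arctan t_j, i.e. a quadratic polynomial divided by 1 + t_j^2.  Three points
   of each line then force its coefficients to vanish, which yields w = 0:
   directly in cases (1) and (2), and by descending induction on j in case (3),
   where the base point is chosen with nonzero coordinates so that the products
   of sines multiplying the coefficients do not vanish. *)

From HB Require Import structures.
From mathcomp Require Import all_boot all_order all_algebra.
From mathcomp Require Import all_classical all_reals all_analysis.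
From mathcomp Require Import ring lra zify.
Import Order.TTheory GRing.Theory Num.Theory.
Import numFieldNormedType.Exports.
Local Open Scope ring_scope.
Local Open Scope classical_set_scope.
Set Implicit Arguments. Unset Strict Implicit. Unset Printing Implicit Defensive.

Lemma ord_rev_ind n (P : 'I_n -> Prop) :
  (forall j : 'I_n, (forall i : 'I_n, (j < i)%N -> P i) -> P j) -> forall j, P j.
Proof.
move=> IH j; have [m] : exists m, (n <= j + m)%N by exists n; rewrite leq_addl.
elim: m j => [|m IHm] j le_n; apply: IH => i lt_ji.
  by have := ltn_ord i; lia.
by apply: IHm; lia.
Qed.

Section RowUpdate.
Variables (T : Type) (n : nat).
Implicit Types (t : 'rV[T]_n) (j l : 'I_n) (x : T).

Definition row_upd t j x : 'rV[T]_n := \row_l (if l == j then x else t 0 l).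

Lemma row_upd_eq t j x : row_upd t j x 0 j = x.
Proof. by rewrite mxE eqxx. Qed.

Lemma row_upd_neq t j x l : l != j -> row_upd t j x 0 l = t 0 l.
Proof. by rewrite mxE => /negbTE ->. Qed.

Lemma big_row_upd (S : Type) (idx : S) (op : Monoid.com_law idx) t j x
    (P : pred 'I_n) (F : 'I_n -> T -> S) : P j ->
  \big[op/idx]_(l | P l) F l (row_upd t j x 0 l)
    = op (F j x) (\big[op/idx]_(l | P l && (l != j)) F l (t 0 l)).
Proof.
move=> Pj; rewrite (bigD1 j) //= row_upd_eq; congr (op _ _).
by apply: eq_bigr => l /andP[_ /row_upd_neq ->].
Qed.

Lemma big_row_upd_out (S : Type) (idx : S) (op : S -> S -> S) t j x
    (P : pred 'I_n) (F : 'I_n -> T -> S) : ~~ P j ->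
  \big[op/idx]_(l | P l) F l (row_upd t j x 0 l) = \big[op/idx]_(l | P l) F l (t 0 l).
Proof.
by move=> Pj; apply: eq_bigr => l Pl; rewrite row_upd_neq //; apply: contraNneq Pj => <-.
Qed.

End RowUpdate.

Arguments big_row_upd {T n S idx op t j x P} F.
Arguments big_row_upd_out {T n S idx op t j x P} F.

Lemma quadratic_coefs_eq0 (R : realFieldType) (A B C x0 d : R) : d != 0 ->
  (forall x, x \in [:: x0; x0 + d; x0 - d] -> A * x ^+ 2 + B * x + C = 0) ->
  [/\ A = 0, B = 0 & C = 0].
Proof.
move=> d_neq0 Hq; pose q x := A * x ^+ 2 + B * x + C.
have [q0 q1 q2] : [/\ q x0 = 0, q (x0 + d) = 0 & q (x0 - d) = 0].
  by split; apply: Hq; rewrite !inE eqxx ?orbT.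
have /eqP : 2 * A * d ^+ 2 = q (x0 + d) + q (x0 - d) - 2 * q x0 by rewrite /q; ring.
rewrite q0 q1 q2 mulr0 !subr0 addr0 !mulf_eq0 pnatr_eq0 (negbTE d_neq0).
rewrite !orbF => /eqP A0.
have /eqP : B * d = q (x0 + d) - q x0 by rewrite /q A0; ring.
rewrite q0 q1 subr0 mulf_eq0 (negbTE d_neq0) orbF => /eqP B0.
by split=> //; move: q0; rewrite /q A0 B0 !mul0r !add0r.
Qed.

Section HalfAngle.
Variable R : realType.
Implicit Types x : R.

Let sqr1D_gt0 x : 0 < 1 + x ^+ 2.
Proof. by rewrite ltr_pwDl // sqr_ge0. Qed.

Let cos_atan_sqr x : cos (atan x) ^+ 2 = (1 + x ^+ 2)^-1.
Proof. by rewrite cos_atan exprVn sqr_sqrtr // ltW. Qed.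

Let sin_atan x : sin (atan x) = x * cos (atan x).
Proof.
rewrite -{2}(atanK x) /tan mulfVK // cos_atan invr_eq0 gt_eqF //.
by rewrite sqrtr_gt0.
Qed.

Lemma cos_2atan x : cos (2 * atan x) = (1 - x ^+ 2) / (1 + x ^+ 2).
Proof.
rewrite mulr2n mulrDl mul1r cosD sin_atan -cos_atan_sqr; ring.
Qed.

Lemma sin_2atan x : sin (2 * atan x) = 2 * x / (1 + x ^+ 2).
Proof.
rewrite mulr2n mulrDl mul1r sinD sin_atan -cos_atan_sqr; ring.
Qed.

Lemma sin_2atan_eq0 x : (sin (2 * atan x) == 0) = (x == 0).
Proof.
rewrite sin_2atan !mulf_eq0 invr_eq0 pnatr_eq0 (gt_eqF (sqr1D_gt0 x)) /=.
by rewrite orbF.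
Qed.

Lemma trig_coefs_eq0 (a g c x0 d : R) : d != 0 ->
  (forall x, x \in [:: x0; x0 + d; x0 - d] ->
     a * cos (2 * atan x) + g * sin (2 * atan x) + c = 0) ->
  a = 0 /\ g = 0.
Proof.
move=> d_neq0 Ht.
have [] := @quadratic_coefs_eq0 R (c - a) (2 * g) (a + c) x0 d d_neq0.
  move=> x /Ht; rewrite cos_2atan sin_2atan => Ex.
  rewrite -(mul0r (1 + x ^+ 2)) -Ex; field.
  exact: lt0r_neq0.
by move=> ? ? ?; split; lra.
Qed.

End HalfAngle.

Section OpenSets.
Variables (R : realType) (n : nat) (O : set 'rV[R]_n).
Hypothesis O_open : open O.

Lemma open_coord_box t : O t ->
  exists2 e : R, 0 < e & forall t' : 'rV[R]_n, (forall j, `|t 0 j - t' 0 j| < e) -> O t'.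
Proof.
move=> Ot; have /nbhs_ballP[e e_gt0 ballO] : nbhs t O by apply: open_nbhs_nbhs.
exists e => // t' near_t; apply: ballO; split=> // i j.
by rewrite (ord1 i) -ball_normE; apply: near_t.
Qed.

Lemma open_coord_lines t : O t -> exists (t1 : 'rV[R]_n) (h : R),
  [/\ h != 0, forall l, t1 0 l != 0 &
      forall j x, x \in [:: t1 0 j; t1 0 j + h; t1 0 j - h] -> O (row_upd t1 j x)].
Proof.
move=> Ot; have [e e_gt0 boxO] := open_coord_box Ot.
pose t1 := \row_l (if t 0 l == 0 then e / 2 else t 0 l).
have t1_near l : `|t 0 l - t1 0 l| <= e / 2.
  rewrite mxE; case: eqP => [->|_]; last by rewrite subrr normr0; lra.
  by rewrite sub0r normrN ger0_norm //; lra.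
exists t1, (e / 4); split; first by apply/eqP; lra.
  by move=> l; rewrite mxE; case: (t 0 l =P 0) => [_|/eqP //]; apply/eqP; lra.
move=> j x x_line; apply: boxO => l; have [->|neq_lj] := eqVneq l j; last first.
  by rewrite row_upd_neq //; apply: le_lt_trans (t1_near l) _; lra.
rewrite row_upd_eq; apply: le_lt_trans (ler_distD (t1 0 j) _ _) _.
have : `|t1 0 j - x| <= e / 4.
  rewrite ler_norml; move: x_line; rewrite !inE => /or3P[] /eqP ->;
  by apply/andP; split; lra.
by have := t1_near j; lra.
Qed.

End OpenSets.

Section LiftMax.
Variables (R : pzRingType) (n : nat).
Implicit Types w s : 'cV[R]_n.+1.

Lemma tr_mulmx_lift_max w s : (w^T *m s) 0 0 =
  \sum_(j < n) w (lift ord_max j) 0 * s (lift ord_max j) 0 + w ord_max 0 * s ord_max 0.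
Proof.
rewrite mxE big_ord_recr /= mxE; congr (_ + _); apply: eq_bigr => j _.
by rewrite mxE; congr (w _ 0 * s _ 0); exact/val_inj/esym/lift_max.
Qed.

Lemma col_lift_max_eq0 w :
  (forall j, w (lift ord_max j) 0 = 0) -> w ord_max 0 = 0 -> w = 0.
Proof.
move=> w_lift w_max; apply/matrixP => i j; rewrite (ord1 j) mxE.
by case: (unliftP ord_max i) => [j'|] ->.
Qed.

End LiftMax.

Lemma tr_mulmx_affine (R : comPzRingType) n (a v s : 'cV[R]_n) (T : 'M[R]_n) :
  (a^T *m (T *m s + v)) 0 0 = ((T^T *m a)^T *m s) 0 0 + (a^T *m v) 0 0.
Proof. by rewrite mulmxDr mulmxA trmx_mul trmxK mxE. Qed.

Lemma sign_vec_neq0 (R : realType) p (eps : 'I_p.+1 -> R) j : sign_vec eps -> eps j != 0.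
Proof. by move/(_ j) => [] ->; rewrite ?oppr_eq0 oner_eq0. Qed.

Section NormalFormDot.
Variables (R : realType) (p : nat) (w : 'cV[R]_p.+2) (t : 'rV[R]_p.+1).

Lemma nf1_dotE eps : (w^T *m nf_sigma' (NF1 eps) t) 0 0 =
  \sum_j w (lift ord_max j) 0 * t 0 j + w ord_max 0 * \sum_j eps j * t 0 j ^+ 2.
Proof.
rewrite tr_mulmx_lift_max mxE unlift_none; congr (_ + _).
by apply: eq_bigr => j _; rewrite mxE liftK.
Qed.

Lemma nf2_dotE eps c' : (w^T *m nf_sigma' (NF2 eps c') t) 0 0 =
  \sum_j w (lift ord_max j) 0 * t 0 j
  + w ord_max 0 * ((t 0 ord0)^-1 * (c' - \sum_(j < p.+1 | (0 < j)%N) eps j * t 0 j ^+ 2)).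
Proof.
rewrite tr_mulmx_lift_max mxE unlift_none; congr (_ + _).
by apply: eq_bigr => j _; rewrite mxE liftK.
Qed.

Lemma nf3_dotE : (w^T *m nf_sigma' (@NF3 R p) t) 0 0 =
  \sum_j w (lift ord_max j) 0 *
    ((\prod_(l < p.+1 | (l < j)%N) sin (2 * atan (t 0 l))) * cos (2 * atan (t 0 j)))
  + w ord_max 0 * \prod_l sin (2 * atan (t 0 l)).
Proof.
rewrite tr_mulmx_lift_max mxE unlift_none; congr (_ + _).
by apply: eq_bigr => j _; rewrite mxE liftK.
Qed.

End NormalFormDot.

Section CoordinateLines.
Variables (R : realType) (p : nat) (t1 : 'rV[R]_p.+1) (h : R).
Variables (w : 'cV[R]_p.+2) (beta : R).
Hypothesis h_neq0 : h != 0.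

Let on_line j x := x \in [:: t1 0 j; t1 0 j + h; t1 0 j - h].

Let in_hyperplane k :=
  forall j x, on_line j x -> (w^T *m nf_sigma' k (row_upd t1 j x)) 0 0 = beta.

Lemma nf1_hyperplane_eq0 eps : sign_vec eps -> in_hyperplane (NF1 eps) -> w = 0.
Proof.
move=> eps_sign hyp1.
have coefs j : w ord_max 0 * eps j = 0 /\ w (lift ord_max j) 0 = 0.
  pose C := \sum_(l | l != j) w (lift ord_max l) 0 * t1 0 l
            + w ord_max 0 * \sum_(l | l != j) eps l * t1 0 l ^+ 2 - beta.
  have [-> -> _] // : [/\ w ord_max 0 * eps j = 0, w (lift ord_max j) 0 = 0 & C = 0].
  apply: (quadratic_coefs_eq0 (x0 := t1 0 j) h_neq0) => x /hyp1; rewrite nf1_dotE.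
  rewrite (big_row_upd (fun l y => w (lift ord_max l) 0 * y)) //.
  rewrite (big_row_upd (fun l y => eps l * y ^+ 2)) //= => E.
  rewrite /C -E; ring.
apply: col_lift_max_eq0 => [j|]; first by case: (coefs j).
have [/eqP] := coefs ord0.
by rewrite mulf_eq0 (negbTE (sign_vec_neq0 _ eps_sign)) orbF => /eqP.
Qed.

Lemma nf2_hyperplane_eq0 eps c' : sign_vec eps -> c' != 0 ->
  (forall x, on_line ord0 x -> x != 0) -> in_hyperplane (NF2 eps c') -> w = 0.
Proof.
move=> eps_sign c'_neq0 line0_neq0 hyp2.
set K := c' - \sum_(l < p.+1 | (0 < l)%N) eps l * t1 0 l ^+ 2.
have coefs0 : w (lift ord_max ord0) 0 = 0 /\ w ord_max 0 * K = 0.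
  pose B := \sum_(l | l != ord0) w (lift ord_max l) 0 * t1 0 l - beta.
  have [-> _ ->] // : [/\ w (lift ord_max ord0) 0 = 0, B = 0 & w ord_max 0 * K = 0].
  apply: (quadratic_coefs_eq0 (x0 := t1 0 ord0) h_neq0) => x x_line.
  have x_neq0 := line0_neq0 x x_line; move/hyp2: x_line.
  rewrite nf2_dotE (big_row_upd (fun l y => w (lift ord_max l) 0 * y)) //=.
  rewrite row_upd_eq (big_row_upd_out (fun l y => eps l * y ^+ 2)) // -/K => E.
  by rewrite /B -E; field.
have coefs (j : 'I_p.+1) : (0 < j)%N -> w ord_max 0 = 0 /\ w (lift ord_max j) 0 = 0.
  move=> j_gt0; pose C := \sum_(l | l != j) w (lift ord_max l) 0 * t1 0 l
    + w ord_max 0 * ((t1 0 ord0)^-1 *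
        (c' - \sum_(l < p.+1 | (0 < l)%N && (l != j)) eps l * t1 0 l ^+ 2)) - beta.
  have [/eqP + -> _] : [/\ - (w ord_max 0 / t1 0 ord0 * eps j) = 0,
                          w (lift ord_max j) 0 = 0 & C = 0].
    apply: (quadratic_coefs_eq0 (x0 := t1 0 j) h_neq0) => x /hyp2.
    rewrite nf2_dotE (big_row_upd (fun l y => w (lift ord_max l) 0 * y)) //=.
    rewrite (big_row_upd (fun l y => eps l * y ^+ 2)) //= row_upd_neq => [E|].
      by rewrite /C -E; ring.
    by apply: contraTneq j_gt0 => <-.
  rewrite oppr_eq0 !mulf_eq0 invr_eq0 (negbTE (sign_vec_neq0 _ eps_sign)) orbF.
  have t10_neq0 : t1 0 ord0 != 0 by apply: line0_neq0; rewrite /on_line inE eqxx.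
  by rewrite (negbTE t10_neq0) orbF => /eqP.
apply: col_lift_max_eq0 => [j|].
  have [->|j_neq0] := eqVneq j ord0; first by case: coefs0.
  by case: (coefs j); rewrite // lt0n; apply: contra j_neq0 => /eqP j0; apply/eqP/val_inj.
have [p0|p_gt0] := posnP p; last by case: (coefs ord_max).
have [_ /eqP] := coefs0; rewrite /K big_pred0 => [|l]; last by have := ltn_ord l; lia.
by rewrite subr0 mulf_eq0 (negbTE c'_neq0) orbF => /eqP.
Qed.

Lemma nf3_hyperplane_eq0 : (forall l, t1 0 l != 0) -> in_hyperplane (@NF3 R p) -> w = 0.
Proof.
move=> t1_neq0 hyp3.
pose sin_prod (P : pred 'I_p.+1) := \prod_(l | P l) sin (2 * atan (t1 0 l)).
have sin_prod_neq0 P : sin_prod P != 0.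
  by apply/prodf_neq0 => l _; rewrite sin_2atan_eq0.
have coefs (j : 'I_p.+1) : (forall i : 'I_p.+1, (j < i)%N -> w (lift ord_max i) 0 = 0) ->
    w (lift ord_max j) 0 = 0 /\ w ord_max 0 = 0.
  move=> w_above.
  pose rest (t : 'rV[R]_p.+1) := \sum_(i | i != j) w (lift ord_max i) 0 *
    ((\prod_(l < p.+1 | (l < i)%N) sin (2 * atan (t 0 l))) * cos (2 * atan (t 0 i))).
  have rest_upd x : rest (row_upd t1 j x) = rest t1.
    apply: eq_bigr => i neq_ij; case: (ltngtP i j) => [lt_ij|lt_ji|/val_inj eq_ij].
    - rewrite row_upd_neq // (big_row_upd_out (fun l y => sin (2 * atan y))) //.
      by rewrite -leqNgt ltnW.
    - by rewrite !w_above ?mul0r.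
    - by rewrite eq_ij eqxx in neq_ij.
  have [] : w (lift ord_max j) 0 * sin_prod (fun l => (l < j)%N) = 0 /\
            w ord_max 0 * sin_prod (fun l => l != j) = 0.
    apply: (trig_coefs_eq0 (c := rest t1 - beta) (x0 := t1 0 j) h_neq0) => x /hyp3.
    rewrite nf3_dotE (bigD1 j) //= row_upd_eq.
    rewrite (big_row_upd_out (fun l y => sin (2 * atan y))) ?ltnn //.
    rewrite (big_row_upd (fun l y => sin (2 * atan y))) //=.
    have := rest_upd x; rewrite /rest => -> E.
    by rewrite -E /sin_prod; ring.
  by move=> /eqP + /eqP; rewrite !mulf_eq0 !(negbTE (sin_prod_neq0 _)) !orbF => /eqP -> /eqP.
apply: col_lift_max_eq0 => [|]; first by apply: ord_rev_ind => j /coefs[].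
by case: (coefs ord_max) => // i; rewrite ltnNge -ltnS ltn_ord.
Qed.

Lemma nf_hyperplane_eq0 (A : 'M[R]_p.+2) k : nf_valid A k ->
  (forall l, t1 0 l != 0) -> (forall x, on_line ord0 x -> nf_dom k (row_upd t1 ord0 x)) ->
  in_hyperplane k -> w = 0.
Proof.
case: k => [eps [eps_sign _]|eps c' [eps_sign [c'_neq0 _]]|_] t1_neq0 line_dom.
- exact: nf1_hyperplane_eq0.
- by apply: nf2_hyperplane_eq0 => // x /line_dom; rewrite /= row_upd_eq.
- exact: nf3_hyperplane_eq0.
Qed.

End CoordinateLines.

Theorem lemma5 (R : realType) (p : nat) (A : 'M[R]_p.+2) (b : 'cV[R]_p.+2) (c : R)
  (T : 'M[R]_p.+2) (v : 'cV[R]_p.+2) (k : nf_case R p) (O : set 'rV[R]_p.+1) :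
  A^T = A -> A != 0 ->
  (exists s1 s2 : 'cV[R]_p.+2, s1 != s2 /\ quad A b c s1 = 0 /\ quad A b c s2 = 0) ->
  ~ (exists (s0 d : 'cV[R]_p.+2), d != 0 /\
       forall lam : R, quad A b c (s0 + lam *: d) = 0) ->
  T \in unitmx -> nf_valid A k ->
  (forall s' : 'cV[R]_p.+2, quad A b c (T *m s' + v) = 0 <-> nf_eq k s') ->
  open O -> O `<=` nf_dom k ->
  (forall t, O t -> nf_sigma T v k t 0 0 != 0) ->
  (exists t, O t /\ \det (jacobian (nf_sigbar' k) t) != 0) ->
  ~ (exists (a : 'cV[R]_p.+2) (beta : R), a != 0 /\
       forall t, O t -> (a^T *m nf_sigma T v k t) 0 0 = beta).
Proof.
move=> _ _ _ _ T_unit k_valid _ O_open O_dom _ [t0 [Ot0 _]] [a [beta [a_neq0 a_const]]].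
have [t1 [h [h_neq0 t1_neq0 t1_lines]]] := open_coord_lines O_open Ot0.
have Ta_eq0 : T^T *m a = 0.
  apply: (nf_hyperplane_eq0 (beta := beta - (a^T *m v) 0 0) h_neq0 k_valid t1_neq0).
    by move=> x /t1_lines /O_dom.
  move=> j x /t1_lines /a_const; rewrite /nf_sigma tr_mulmx_affine => <-.
  by rewrite addrK.
by move/eqP: a_neq0; apply; rewrite -(mulKmx (x := T^T) _ a) ?unitmx_tr // Ta_eq0 mulmx0.
Qed.
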